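(* For every integer $n\ge4$ there exists a real number $\alpha>0$ which is an infinite loop mod $n$.
   Context: For $\alpha$ with simple continued fraction $[a_0;a_1,\ldots]$, convergents $p_k/q_k$ are given by $p_{-1}=1,q_{-1}=0,p_0=a_0,q_0=1$, $p_k=a_kp_{k-1}+p_{k-2}$, $q_k=a_kq_{k-1}+q_{k-2}$, and semi-convergents are $(mp_k+p_{k-1})/(mq_k+q_{k-1})$ for $0\le m\le a_{k+1}$. A real $\alpha>0$ is an \emph{infinite loop mod $n$} if none of its semi-convergent denominators is divisible by $n$, except $q_{-1}=0$ (for rational $\alpha$, both finite expansions are considered and the expansion is regarded as ending with a partial quotient $\infty$, so all $m\ge0$ are allowed after the last convergent). *)

From Stdlib Require Import Reals Arith.
Open Scope R_scope.

(* A candidate simple continued fraction expansion is encoded as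
   a : nat -> option nat, where a k = Some a_k is the k-th partial quotient
   and a k = None means the expansion has ended (partial quotient "infinity").
   Since alpha > 0, a_0 >= 0, so natural numbers suffice. *)

(* cf_state a k = ((p_{k-1}, q_{k-1}), (p_k, q_k)) *)
Fixpoint cf_state (a : nat -> option nat) (k : nat) : (nat * nat) * (nat * nat) :=
  match k with
  | O => ((1%nat, 0%nat), (match a O with Some b => b | None => 0%nat end, 1%nat))
  | S k' =>
      let '((p', q'), (p, q)) := cf_state a k' in
      let b := match a (S k') with Some b => b | None => 0%nat end in
      ((p, q), (b * p + p', b * q + q')%nat)
  end.

Definition cf_p (a : nat -> option nat) (k : nat) : nat := fst (snd (cf_state a k)).
Definition cf_q (a : nat -> option nat) (k : nat) : nat := snd (snd (cf_state a k)).
Definition cf_qprev (a : nat -> option nat) (k : nat) : nat := snd (fst (cf_state a k)).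

Definition is_cf_expansion (x : R) (a : nat -> option nat) : Prop :=
  a O <> None /\
  (forall k, a k = None -> a (S k) = None) /\
  (forall k b, a (S k) = Some b -> (1 <= b)%nat) /\
  ((forall k, a k <> None) ->
     Un_cv (fun k => INR (cf_p a k) / INR (cf_q a k)) x) /\
  (forall N, a N <> None -> a (S N) = None ->
     x = INR (cf_p a N) / INR (cf_q a N)).

Definition semi_conv_den (a : nat -> option nat) (k m d : nat) : Prop :=
  a k <> None /\
  (match a (S k) with Some b => (m <= b)%nat | None => True end) /\
  d = (m * cf_q a k + cf_qprev a k)%nat.

(* alpha is an infinite loop mod n: for every expansion of alpha (both
   finite ones if alpha is rational), no semi-convergent denominator is
   divisible by n, except q_{-1} = 0 (the index k = 0, m = 0). *)
Definition infinite_loop_mod (n : nat) (alpha : R) : Prop :=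
  0 < alpha /\
  forall a, is_cf_expansion alpha a ->
  forall k m d, semi_conv_den a k m d -> ~ (k = O /\ m = O) ->
    ~ Nat.divide n d.

From Stdlib Require Import Reals Lra Lia Psatz ZArith List.
From Stdlib Require Import Classical FunctionalExtensionality.
Import ListNotations.
Open Scope R_scope.

(** - [n = 4]: [alpha = 3/2], whose only expansions are [[1; 2]] and
      [[1; 1, 1]]; their semi-convergent denominators are listed directly.
    - [n >= 5]: [alpha = [1; n-2, 1, n-4, 1, n-4, ...]].  Modulo [n] the pairs
      [(q_{k-1}, q_k)] cycle through [(1,-2), (-2,-1), (-1,2), (2,1)], so every
      semi-convergent denominator is congruent to a nonzero number of absolute
      value [< n].

    The key invariant is that
    [x] is "bracketed" by each pair of consecutive convergents of any of its
    expansions: the errors [x q_k - p_k] and [x q_{k-1} - p_{k-1}] have opposite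
    signs and the first is not larger.  It holds at every convergent, descends
    to earlier indices and passes to limits.  It pins each partial quotient
    down to an interval of length [1], which gives uniqueness of infinite
    expansions and the explicit list of expansions of [3/2]; together with the
    bound [|x - p_k/q_k| <= 1/q_k] it also shows that every infinite sequence
    of positive partial quotients is the expansion of some real. *)

(** * Convergent recurrences *)

Definition cf_pprev (a : nat -> option nat) (k : nat) : nat := fst (fst (cf_state a k)).
Definition quot (o : option nat) : nat := match o with Some b => b | None => 0%nat end.

Lemma cf_state_0 a :
  cf_pprev a 0 = 1%nat /\ cf_qprev a 0 = 0%nat /\
  cf_p a 0 = quot (a 0%nat) /\ cf_q a 0 = 1%nat.
Proof. unfold cf_pprev, cf_qprev, cf_p, cf_q; simpl; auto. Qed.

Lemma cf_state_S a k :
  cf_pprev a (S k) = cf_p a k /\ cf_qprev a (S k) = cf_q a k /\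
  cf_p a (S k) = (quot (a (S k)) * cf_p a k + cf_pprev a k)%nat /\
  cf_q a (S k) = (quot (a (S k)) * cf_q a k + cf_qprev a k)%nat.
Proof.
  unfold cf_pprev, cf_qprev, cf_p, cf_q; simpl.
  destruct (cf_state a k) as [[? ?] [? ?]]; simpl; auto.
Qed.

Lemma cf_state_prefix a b k :
  (forall i, (i <= k)%nat -> a i = b i) -> cf_state a k = cf_state b k.
Proof.
  induction k as [|k IH]; intros Hab; simpl.
  - now rewrite (Hab 0%nat) by lia.
  - rewrite IH by (intros; apply Hab; lia). now rewrite (Hab (S k)) by lia.
Qed.

Lemma cf_det a k :
  (cf_pprev a k * cf_q a k = cf_p a k * cf_qprev a k + 1)%nat \/
  (cf_p a k * cf_qprev a k = cf_pprev a k * cf_q a k + 1)%nat.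
Proof.
  induction k as [|k IH].
  - destruct (cf_state_0 a) as (-> & -> & -> & ->). lia.
  - destruct (cf_state_S a k) as (-> & -> & -> & ->).
    destruct IH; [right | left]; nia.
Qed.

Lemma cf_q_lower_bound a k :
  (forall i, (1 <= i <= k)%nat -> (1 <= quot (a i))%nat) ->
  (1 <= cf_q a k /\ k <= cf_q a k /\ (1 <= k -> 1 <= cf_qprev a k))%nat.
Proof.
  induction k as [|k IH]; intros Hpos.
  - destruct (cf_state_0 a) as (_ & -> & _ & ->). lia.
  - destruct (cf_state_S a k) as (_ & -> & _ & ->).
    assert (Hb : (1 <= quot (a (S k)))%nat) by (apply Hpos; lia).
    destruct IH as (H1 & H2 & H3); [intros i Hi; apply Hpos; lia |].
    destruct k; nia.
Qed.

(** * Approximation errors and the bracketing invariant *)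

Definition conv a k : R := INR (cf_p a k) / INR (cf_q a k).
Definition err a (y : R) k : R := y * INR (cf_q a k) - INR (cf_p a k).
Definition err_prev a (y : R) k : R := y * INR (cf_qprev a k) - INR (cf_pprev a k).

(** The error pair one step before [k]; at [k = 0] it is the pair
    [(y q_{-1} - p_{-1}, y q_{-2} - p_{-2}) = (-1, y)]. *)
Definition err_base a (y : R) k : R * R :=
  match k with
  | O => (-1, y)
  | S k' => (err a y k', err_prev a y k')
  end.

Lemma err_unfold a y k :
  err_prev a y k = fst (err_base a y k) /\
  err a y k = INR (quot (a k)) * fst (err_base a y k) + snd (err_base a y k).
Proof.
  destruct k as [|k]; cbn [err_base fst snd]; unfold err, err_prev.
  - destruct (cf_state_0 a) as (-> & -> & -> & ->). simpl. split; ring.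
  - destruct (cf_state_S a k) as (-> & -> & -> & ->).
    rewrite !plus_INR, !mult_INR. split; ring.
Qed.

(** By the determinant identity the two errors never vanish together. *)
Lemma err_not_both_zero a y k : ~ (err a y k = 0 /\ err_prev a y k = 0).
Proof.
  unfold err, err_prev. intros [H1 H2].
  destruct (cf_det a k) as [H | H]; apply (f_equal INR) in H;
    rewrite !plus_INR, !mult_INR in H; simpl in H; nra.
Qed.

(** [y] is bracketed at [k] when the two errors have opposite signs and the
    newer one is not larger: equivalently [y = (p_k t + p_{k-1})/(q_k t + q_{k-1})]
    for a "complete quotient" [t] in [[1, +oo]]. *)
Definition bracketed a (y : R) k : Prop :=
  err a y k * err_prev a y k <= 0 /\ err a y k ^ 2 <= err_prev a y k ^ 2.

Lemma bracketed_convergent a k : (1 <= cf_q a k)%nat -> bracketed a (conv a k) k.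
Proof.
  intros Hq. apply le_INR in Hq. simpl in Hq.
  assert (E : err a (conv a k) k = 0) by (unfold err, conv; field; lra).
  unfold bracketed. rewrite E. split; nra.
Qed.

(** Bracketing descends through a partial quotient [>= 1]: a complete
    quotient [t >= 1] at [k+1] gives the complete quotient [a_{k+1} + 1/t >= 1]
    at [k]. *)
Lemma bracketed_pred a y k :
  (1 <= quot (a (S k)))%nat -> bracketed a y (S k) -> bracketed a y k.
Proof.
  intros Hb. apply le_INR in Hb. simpl in Hb. unfold bracketed.
  destruct (err_unfold a y (S k)) as [-> ->]. cbn [err_base fst snd].
  generalize (err a y k) (err_prev a y k) (INR (quot (a (S k)))) Hb.
  intros u v t Ht [H1 H2].
  destruct (Rle_lt_dec 0 u) as [Hu | Hu].
  - destruct (Req_dec u 0) as [-> | Hu0]; [split; nra |].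
    assert (t * u + v <= 0) by nra.
    assert (t * u + v >= -u) by (destruct (Rlt_or_le (t * u + v) (-u)); nra).
    assert (v <= -u) by nra. split; nra.
  - assert (t * u + v >= 0) by nra.
    assert (t * u + v <= -u) by (destruct (Rlt_or_le (-u) (t * u + v)); nra).
    assert (v >= -u) by nra. split; nra.
Qed.

Lemma bracketed_before a y k j :
  (forall i, (k < i <= j)%nat -> (1 <= quot (a i))%nat) ->
  (k <= j)%nat -> bracketed a y j -> bracketed a y k.
Proof.
  intros Hpos Hkj. induction Hkj as [| j Hkj IH]; [auto |].
  intros Hj. apply IH; [intros i Hi; apply Hpos; lia |].
  apply bracketed_pred; [apply Hpos; lia | exact Hj].
Qed.

Lemma Un_cv_nonpos c l k : Un_cv c l -> (forall j, (k <= j)%nat -> c j <= 0) -> l <= 0.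
Proof.
  intros Hc Hneg. destruct (Rle_lt_dec l 0) as [| Hl]; [auto |].
  destruct (Hc l Hl) as [N HN].
  specialize (HN (max N k) ltac:(lia)). specialize (Hneg (max N k) ltac:(lia)).
  unfold Rdist in HN. rewrite Rabs_left1 in HN; lra.
Qed.

Lemma bracketed_limit a k c x :
  Un_cv c x -> (forall j, (k <= j)%nat -> bracketed a (c j) k) -> bracketed a x k.
Proof.
  intros Hc Hbr. split.
  - set (f := fun y => err a y k * err_prev a y k).
    apply (Un_cv_nonpos (fun j => f (c j)) (f x) k).
    + apply continuity_seq; [unfold f, err, err_prev; reg | exact Hc].
    + intros j Hj. exact (proj1 (Hbr j Hj)).
  - set (g := fun y => err a y k ^ 2 - err_prev a y k ^ 2).
    enough (g x <= 0) by (unfold g in *; lra).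
    apply (Un_cv_nonpos (fun j => g (c j)) (g x) k).
    + apply continuity_seq; [unfold g, err, err_prev; reg | exact Hc].
    + intros j Hj. destruct (Hbr j Hj) as [_ H]. unfold g. lra.
Qed.

Lemma bracketed_error_bound a y k :
  (1 <= cf_q a k)%nat -> bracketed a y k -> Rabs (y - conv a k) <= 1 / INR (cf_q a k).
Proof.
  intros Hq [Hsign Hsize]. apply le_INR in Hq. simpl in Hq.
  assert (Hq' := pos_INR (cf_qprev a k)).
  assert (Hdet : (err_prev a y k * INR (cf_q a k) - err a y k * INR (cf_qprev a k)) ^ 2 = 1).
  { unfold err, err_prev. destruct (cf_det a k) as [H | H]; apply (f_equal INR) in H;
      rewrite !plus_INR, !mult_INR in H; simpl in H; nra. }
  assert (E : y - conv a k = err a y k / INR (cf_q a k)) by (unfold err, conv; field; lra).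
  rewrite E. revert Hsign Hsize Hdet Hq Hq'.
  generalize (err a y k) (err_prev a y k) (INR (cf_q a k)) (INR (cf_qprev a k)).
  intros u v Q Q' Hsign Hsize Hdet HQ HQ'.
  assert (Hu : u ^ 2 * Q ^ 2 <= 1).
  { assert (v ^ 2 * Q ^ 2 - 2 * (u * v) * (Q * Q') + u ^ 2 * Q' ^ 2 = 1) by nra.
    assert (0 <= Q * Q') by nra. assert (0 <= u ^ 2 * Q' ^ 2) by nra.
    assert (u ^ 2 * Q ^ 2 <= v ^ 2 * Q ^ 2) by nra. nra. }
  assert (u ^ 2 <= u ^ 2 * Q ^ 2) by (assert (1 <= Q ^ 2) by nra; nra).
  assert (Rabs u <= 1) by (apply Rabs_le; split; nra).
  unfold Rdiv. rewrite Rabs_mult, Rabs_inv, (Rabs_right Q) by lra.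
  apply Rmult_le_compat_r; [left; apply Rinv_0_lt_compat |]; lra.
Qed.

(** A partial quotient is pinned down by bracketing: if [s] satisfies the
    bracketing inequalities for the pair [(U, V)] strictly and [t] weakly,
    then [s = t]: both lie in [[-V/U - 1, -V/U]], and [s] in its interior. *)
Lemma quotient_determined (U V : R) (s t : nat) :
  (INR s * U + V) * U < 0 -> (INR s * U + V) ^ 2 < U ^ 2 ->
  (INR t * U + V) * U <= 0 -> (INR t * U + V) ^ 2 <= U ^ 2 -> s = t.
Proof.
  intros Hs1 Hs2 Ht1 Ht2.
  assert (HU : 0 < U * U) by (destruct (Req_dec U 0) as [-> | ]; nra).
  assert (Hs3 : - (U * U) < (INR s * U + V) * U) by nra.
  assert (Ht3 : - (U * U) <= (INR t * U + V) * U) by nra.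
  assert (Hclose : INR s < INR t + 1 /\ INR t < INR s + 1) by (split; nra).
  destruct Hclose as [H1 H2].
  assert (s < t + 1)%nat by (apply INR_lt; rewrite plus_INR; simpl; lra).
  assert (t < s + 1)%nat by (apply INR_lt; rewrite plus_INR; simpl; lra).
  lia.
Qed.

(** * Properties of an arbitrary expansion of [x] *)

Section Expansion.
Variables (x : R) (a : nat -> option nat).
Hypothesis Hexp : is_cf_expansion x a.

Lemma exp_defined_before k i : a k <> None -> (i <= k)%nat -> a i <> None.
Proof.
  destruct Hexp as (_ & Hnone & _). intros Hk Hik.
  induction Hik as [| k Hik IH]; [auto |]. intro Hi. apply IH; auto.
Qed.

Lemma exp_quot_pos i : (1 <= i)%nat -> a i <> None -> (1 <= quot (a i))%nat.
Proof.
  destruct Hexp as (_ & _ & Hpos & _). intros Hi Hai.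
  destruct i as [| i]; [lia |]. destruct (a (S i)) as [t |] eqn:E; [| congruence].
  exact (Hpos i t E).
Qed.

Lemma exp_q_pos k : a k <> None -> (1 <= cf_q a k)%nat.
Proof.
  intros Hk. apply cf_q_lower_bound. intros i Hi.
  apply exp_quot_pos; [lia | apply (exp_defined_before k); [auto | lia]].
Qed.

Lemma exp_convergent_bracketed k j :
  a j <> None -> (k <= j)%nat -> bracketed a (conv a j) k.
Proof.
  intros Hj Hkj. apply (bracketed_before a _ k j); auto.
  - intros i Hi. apply exp_quot_pos; [lia | apply (exp_defined_before j); [auto | lia]].
  - apply bracketed_convergent, exp_q_pos, Hj.
Qed.

Lemma exp_last_index k :
  a k <> None -> (exists j, a j = None) ->
  exists N, (k <= N)%nat /\ a N <> None /\ a (S N) = None.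
Proof.
  destruct Hexp as (H0 & Hnone & _). intros Hk [j Hj].
  assert (Hlast : exists N, a N <> None /\ a (S N) = None).
  { clear Hk. induction j as [| j IH]; [congruence |].
    destruct (a j) eqn:E; [exists j; split; congruence | auto]. }
  destruct Hlast as [N [HN HSN]]. exists N. repeat split; auto.
  destruct (le_lt_dec k N) as [| HNk]; [auto |]. exfalso. apply Hk. clear Hk.
  induction HNk; auto.
Qed.

(** [x] is bracketed at every index of its expansion: either [x] is the
    last convergent, or it is the limit of the convergents. *)
Lemma exp_bracketed k : a k <> None -> bracketed a x k.
Proof.
  intros Hk. destruct Hexp as (_ & _ & _ & Hinf & Hfin).
  destruct (classic (forall j, a j <> None)) as [Hall | Hsome].
  - apply (bracketed_limit a k (conv a)); [exact (Hinf Hall) |].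
    intros j Hj. apply exp_convergent_bracketed; auto.
  - apply not_all_ex_not in Hsome. destruct Hsome as [j Hj]. apply NNPP in Hj.
    destruct (exp_last_index k Hk (ex_intro _ j Hj)) as (N & HkN & HN & HSN).
    rewrite (Hfin N HN HSN). apply exp_convergent_bracketed; auto.
Qed.

Lemma exp_err_last k : a k <> None -> a (S k) = None -> err a x k = 0.
Proof.
  intros Hk HSk. destruct Hexp as (_ & _ & _ & _ & Hfin).
  assert (Hq := exp_q_pos k Hk). apply le_INR in Hq. simpl in Hq.
  rewrite (Hfin k Hk HSk). unfold err. field. lra.
Qed.

(** Conversely, a partial quotient after [k] means [x <> p_k/q_k]: otherwise
    the next error pair would be [(v, 0)], violating bracketing at [k+1]. *)
Lemma exp_err_next k : a (S k) <> None -> err a x k <> 0.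
Proof.
  intros HSk Hzero. destruct (exp_bracketed (S k) HSk) as [_ Hsize].
  destruct (err_unfold a x (S k)) as [Ev Eu]. cbn [err_base fst snd] in Ev, Eu.
  apply (err_not_both_zero a x k). split; [auto |].
  rewrite Ev, Eu, Hzero in Hsize. nra.
Qed.

Lemma exp_quot_bracketed k t :
  a k = Some t ->
  (INR t * fst (err_base a x k) + snd (err_base a x k)) * fst (err_base a x k) <= 0 /\
  (INR t * fst (err_base a x k) + snd (err_base a x k)) ^ 2 <= fst (err_base a x k) ^ 2.
Proof.
  intros Ht. destruct (exp_bracketed k ltac:(congruence)) as [Hsign Hsize].
  destruct (err_unfold a x k) as [Ev Eu]. rewrite Ev, Eu, Ht in Hsign, Hsize.
  split; assumption.
Qed.

Lemma exp_step k u v :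
  a k <> None -> err a x k = u -> err_prev a x k = v -> u <> 0 ->
  exists t, a (S k) = Some t /\ (1 <= t)%nat /\ (INR t * u + v) * u <= 0 /\
    err a x (S k) = INR t * u + v /\ err_prev a x (S k) = u.
Proof.
  intros Hk Hu Hv Hu0.
  destruct (a (S k)) as [t |] eqn:E;
    [| exfalso; apply Hu0; rewrite <- Hu; exact (exp_err_last k Hk E)].
  assert (Ht := exp_quot_pos (S k) ltac:(lia) ltac:(congruence)). rewrite E in Ht.
  destruct (exp_quot_bracketed (S k) t E) as [Hsign _]. cbn [err_base fst snd] in Hsign.
  destruct (err_unfold a x (S k)) as [Ev Eu]. cbn [err_base fst snd] in Ev, Eu.
  rewrite E, Hu, Hv in *. exists t. auto.
Qed.

Lemma exp_stops k : err a x k = 0 -> forall i, (k < i)%nat -> a i = None.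
Proof.
  intros Hzero i Hki. destruct Hexp as (_ & Hnone & _).
  induction Hki as [| i Hki IH]; [| auto].
  destruct (a (S k)) eqn:E; [exfalso; apply (exp_err_next k); congruence | reflexivity].
Qed.

Lemma exp_bracketed_strict k :
  a (S k) <> None -> a (S (S k)) <> None ->
  err a x k * err_prev a x k < 0 /\ err a x k ^ 2 < err_prev a x k ^ 2.
Proof.
  intros HSk HSSk.
  destruct (exp_bracketed k (exp_defined_before (S k) k HSk ltac:(lia))) as [Hsign Hsize].
  destruct (exp_bracketed (S k) HSk) as [Hsign1 Hsize1].
  assert (Hu := exp_err_next k HSk). assert (Hu1 := exp_err_next (S k) HSSk).
  assert (Hs := exp_quot_pos (S k) ltac:(lia) HSk). apply le_INR in Hs. simpl in Hs.
  destruct (err_unfold a x (S k)) as [Ev Eu]. cbn [err_base fst snd] in Ev, Eu.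
  rewrite Ev, Eu in *. revert Hsign Hsize Hsign1 Hsize1 Hu Hu1 Hs.
  generalize (err a x k) (err_prev a x k) (INR (quot (a (S k)))).
  intros u v s Hsign Hsize Hsign1 Hsize1 Hu Hu1 Hs.
  assert (Hv : v <> 0) by (intros ->; apply Hu; nra).
  assert (Huv : u * v < 0).
  { destruct (Rle_lt_dec 0 (u * v)); [| auto].
    exfalso. assert (u * v = 0) by lra. apply Rmult_integral in H. tauto. }
  split; [exact Huv |].
  destruct (Rle_lt_dec (v ^ 2) (u ^ 2)) as [Hge |]; [exfalso | auto].
  assert (Hvu : v = - u) by nra. subst v.
  assert (s = 1) by nra. subst s. apply Hu1. ring.
Qed.

End Expansion.

(** * Uniqueness of infinite expansions *)

Lemma err_base_prefix a b y k :
  (forall i, (i < k)%nat -> a i = b i) -> err_base a y k = err_base b y k.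
Proof.
  intros Hab. destruct k as [| k]; [reflexivity |]. cbn [err_base].
  assert (Hst : cf_state a k = cf_state b k) by (apply cf_state_prefix; intros; apply Hab; lia).
  unfold err, err_prev, cf_q, cf_p, cf_qprev, cf_pprev. now rewrite Hst.
Qed.

(** If [x] has an infinite expansion [a] and another expansion [b] agrees
    with [a] below [k], then it also agrees at [k]: both [a_k] and [b_k]
    satisfy the bracketing inequalities for the same error pair, strictly
    for [a_k], and [b] cannot stop before [k] since [x] is not a convergent. *)
Lemma exp_quot_agree x a b k :
  is_cf_expansion x a -> (forall j, a j <> None) -> is_cf_expansion x b ->
  (forall i, (i < k)%nat -> b i = a i) -> b k = a k.
Proof.
  intros Ha Hall Hb Hagree.
  assert (Ebase : err_base b x k = err_base a x k) by (apply err_base_prefix; auto).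
  destruct (err_unfold a x k) as [Va Ua].
  destruct (exp_bracketed_strict x a Ha k (Hall (S k)) (Hall (S (S k)))) as [Sa1 Sa2].
  rewrite Va, Ua in Sa1, Sa2.
  destruct (a k) as [s |] eqn:Eak; [| exfalso; exact (Hall k Eak)].
  destruct (b k) as [t |] eqn:Ebk.
  - destruct (exp_quot_bracketed x b Hb k t Ebk) as [Sb1 Sb2]. rewrite Ebase in Sb1, Sb2.
    f_equal. symmetry.
    apply (quotient_determined (fst (err_base a x k)) (snd (err_base a x k)) s t); auto.
  - destruct k as [| k]; [exfalso; destruct Hb as [H0 _]; exact (H0 Ebk) |].
    exfalso. apply (exp_err_next x a Ha k (Hall (S k))).
    assert (Hbk : b k <> None) by (rewrite (Hagree k ltac:(lia)); apply Hall).
    rewrite <- (exp_err_last x b Hb k Hbk Ebk).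
    now cbn [err_base] in Ebase; injection Ebase.
Qed.

Lemma exp_unique x a b :
  is_cf_expansion x a -> (forall j, a j <> None) -> is_cf_expansion x b ->
  forall k, b k = a k.
Proof.
  intros Ha Hall Hb.
  enough (Hbelow : forall k i, (i < k)%nat -> b i = a i) by (intros k; apply (Hbelow (S k)); lia).
  induction k as [| k IH]; intros i Hi; [lia |].
  destruct (Nat.eq_dec i k) as [-> |]; [| apply IH; lia].
  apply (exp_quot_agree x a b k); auto.
Qed.

(** * Existence of the value of an infinite expansion *)

(** With positive partial quotients the convergents form a Cauchy sequence,
    since [|p_j/q_j - p_k/q_k| <= 1/q_k <= 1/k] for [j >= k]. *)
Lemma convergents_cauchy a :
  (forall i, (1 <= i)%nat -> (1 <= quot (a i))%nat) -> Cauchy_crit (conv a).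
Proof.
  intros Hpos.
  assert (Hclose : forall k j, (1 <= k <= j)%nat -> Rabs (conv a j - conv a k) <= / INR k).
  { intros k j Hkj.
    destruct (cf_q_lower_bound a k) as (Hq1 & Hqk & _); [intros i Hi; apply Hpos; lia |].
    apply Rle_trans with (1 / INR (cf_q a k)).
    - apply bracketed_error_bound; [exact Hq1 |].
      apply (bracketed_before a _ k j); [intros i Hi; apply Hpos; lia | lia |].
      apply bracketed_convergent. apply cf_q_lower_bound. intros i Hi. apply Hpos. lia.
    - unfold Rdiv. rewrite Rmult_1_l. apply Rinv_le_contravar.
      + apply lt_0_INR. lia.
      + apply le_INR. exact Hqk. }
  intros eps Heps. destruct (archimed_cor1 (eps / 2)) as [N [HN HN0]]; [lra |].
  exists N. intros i j Hi Hj. unfold Rdist.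
  assert (Hi' := Hclose N i ltac:(lia)). assert (Hj' := Hclose N j ltac:(lia)).
  replace (conv a i - conv a j) with ((conv a i - conv a N) - (conv a j - conv a N)) by ring.
  eapply Rle_lt_trans; [apply Rabs_triang |]. rewrite Rabs_Ropp. lra.
Qed.

Lemma infinite_expansion_exists a :
  (forall j, a j <> None) -> (forall j t, a (S j) = Some t -> (1 <= t)%nat) ->
  exists x, is_cf_expansion x a.
Proof.
  intros Hall Hpos.
  assert (Hquot : forall i, (1 <= i)%nat -> (1 <= quot (a i))%nat).
  { intros [| i] Hi; [lia |]. destruct (a (S i)) as [t |] eqn:E; [exact (Hpos i t E) |].
    exfalso. exact (Hall (S i) E). }
  destruct (R_complete (conv a) (convergents_cauchy a Hquot)) as [x Hx].
  exists x. repeat split.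
  - apply Hall.
  - intros k E. exfalso. exact (Hall k E).
  - exact Hpos.
  - intros _. exact Hx.
  - intros N _ E. exfalso. exact (Hall (S N) E).
Qed.

(** * Denominators modulo [n] *)

Definition den_residues (n : nat) (a : nat -> option nat) (k : nat) (r s : Z) : Prop :=
  (Z.of_nat n | Z.of_nat (cf_qprev a k) - r)%Z /\ (Z.of_nat n | Z.of_nat (cf_q a k) - s)%Z.

Lemma den_residues_0 n a : den_residues n a 0 0 1.
Proof.
  unfold den_residues. destruct (cf_state_0 a) as (_ & -> & _ & ->). split; exists 0%Z; lia.
Qed.

Lemma den_residues_S n a k r s t s' :
  den_residues n a k r s -> a (S k) = Some t ->
  (Z.of_nat n | Z.of_nat t * s + r - s')%Z -> den_residues n a (S k) s s'.
Proof.
  intros [[c1 H1] [c2 H2]] Ht [c3 H3]. unfold den_residues.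
  destruct (cf_state_S a k) as (_ & -> & _ & ->). rewrite Ht. cbn [quot].
  split; [exists c2; exact H2 |].
  exists (Z.of_nat t * c2 + c1 + c3)%Z. rewrite Nat2Z.inj_add, Nat2Z.inj_mul. lia.
Qed.

Lemma semiconv_not_multiple n a k r s m :
  den_residues n a k r s ->
  (0 < Z.abs (Z.of_nat m * s + r) < Z.of_nat n)%Z ->
  ~ Nat.divide n (m * cf_q a k + cf_qprev a k).
Proof.
  intros [[c1 H1] [c2 H2]] Hrange [z Hz]. apply (f_equal Z.of_nat) in Hz.
  rewrite Nat2Z.inj_add, !Nat2Z.inj_mul in Hz.
  assert (E : (Z.of_nat m * s + r = (Z.of_nat z - Z.of_nat m * c2 - c1) * Z.of_nat n)%Z) by lia.
  rewrite E in Hrange. revert Hrange. generalize (Z.of_nat z - Z.of_nat m * c2 - c1)%Z.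
  intros w Hrange. rewrite Z.abs_mul, (Z.abs_eq (Z.of_nat n)) in Hrange by lia.
  destruct (Z.eq_dec w 0) as [-> | Hw]; [lia |].
  assert (1 <= Z.abs w)%Z by lia. nia.
Qed.

(** * The periodic expansion [[1; n-2, 1, n-4, 1, n-4, ...]] *)

Definition loop_quot (n k : nat) : option nat :=
  Some (match k with
        | O => 1
        | S O => n - 2
        | _ => if Nat.even k then 1 else n - 4
        end)%nat.

Lemma loop_quot_even n j : loop_quot n (2 * j + 2) = Some 1%nat.
Proof.
  unfold loop_quot. replace (2 * j + 2)%nat with (S (S (2 * j))) by lia.
  now rewrite Nat.even_succ, Nat.odd_succ, Nat.even_even.
Qed.

Lemma loop_quot_odd n j : loop_quot n (2 * j + 3) = Some (n - 4)%nat.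
Proof.
  unfold loop_quot. replace (2 * j + 3)%nat with (S (S (S (2 * j)))) by lia.
  now rewrite Nat.even_succ, Nat.odd_succ, Nat.even_succ, <- Nat.negb_even, Nat.even_even.
Qed.

Section LoopResidues.
Variable n : nat.
Hypothesis Hn : (5 <= n)%nat.
Let a := loop_quot n.

Lemma loop_cycle j :
  den_residues n a (4 * j + 1) 1 (-2) ->
  den_residues n a (4 * j + 2) (-2) (-1) /\ den_residues n a (4 * j + 3) (-1) 2 /\
  den_residues n a (4 * j + 4) 2 1 /\ den_residues n a (4 * (S j) + 1) 1 (-2).
Proof.
  intros H1.
  assert (H2 : den_residues n a (4 * j + 2) (-2) (-1)).
  { replace (4 * j + 2)%nat with (S (4 * j + 1)) by lia.
    apply (den_residues_S n a _ 1 (-2) 1); [exact H1 | | exists 0%Z; lia].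
    replace (S (4 * j + 1)) with (2 * (2 * j) + 2)%nat by lia. apply loop_quot_even. }
  assert (H3 : den_residues n a (4 * j + 3) (-1) 2).
  { replace (4 * j + 3)%nat with (S (4 * j + 2)) by lia.
    apply (den_residues_S n a _ (-2) (-1) (n - 4)); [exact H2 | | exists (-1)%Z; lia].
    replace (S (4 * j + 2)) with (2 * (2 * j) + 3)%nat by lia. apply loop_quot_odd. }
  assert (H4 : den_residues n a (4 * j + 4) 2 1).
  { replace (4 * j + 4)%nat with (S (4 * j + 3)) by lia.
    apply (den_residues_S n a _ (-1) 2 1); [exact H3 | | exists 0%Z; lia].
    replace (S (4 * j + 3)) with (2 * (2 * j + 1) + 2)%nat by lia. apply loop_quot_even. }
  split; [exact H2 | split; [exact H3 | split; [exact H4 |]]].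
  replace (4 * S j + 1)%nat with (S (4 * j + 4)) by lia.
  apply (den_residues_S n a _ 2 1 (n - 4)); [exact H4 | | exists 1%Z; lia].
  replace (S (4 * j + 4)) with (2 * (2 * j + 1) + 3)%nat by lia. apply loop_quot_odd.
Qed.

(** In particular [(q_{4j}, q_{4j+1}) = (1, -2)] for all [j], since
    [(q_0, q_1) = (1, n - 2)]. *)
Lemma loop_residues j : den_residues n a (4 * j + 1) 1 (-2).
Proof.
  induction j as [| j IH].
  - apply (den_residues_S n a 0 0 1 (n - 2));
      [apply den_residues_0 | reflexivity | exists 1%Z; lia].
  - apply (loop_cycle j IH).
Qed.

Lemma loop_no_multiple k m :
  (m <= quot (a (S k)))%nat -> ~ (k = O /\ m = O) ->
  ~ Nat.divide n (m * cf_q a k + cf_qprev a k).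
Proof.
  intros Hm Hkm. unfold a in Hm. destruct k as [| k].
  { apply (semiconv_not_multiple n a 0 0 1); [apply den_residues_0 |].
    cbn in Hm. lia. }
  destruct (loop_cycle (k / 4) (loop_residues (k / 4))) as (R2 & R3 & R4 & _).
  assert (R1 := loop_residues (k / 4)).
  assert (Hk := Nat.div_mod_eq k 4). assert (Hr := Nat.mod_upper_bound k 4 ltac:(lia)).
  set (j := (k / 4)%nat) in *. set (r := (k mod 4)%nat) in *. clearbody j r.
  destruct r as [| [| [| [| r]]]]; [| | | | lia]; subst k.
  - replace (S (4 * j + 0)) with (4 * j + 1)%nat in * by lia.
    replace (S (4 * j + 1)) with (2 * (2 * j) + 2)%nat in Hm by lia.
    rewrite loop_quot_even in Hm. apply (semiconv_not_multiple n a _ _ _ m R1). cbn in Hm. lia.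
  - replace (S (4 * j + 1)) with (4 * j + 2)%nat in * by lia.
    replace (S (4 * j + 2)) with (2 * (2 * j) + 3)%nat in Hm by lia.
    rewrite loop_quot_odd in Hm. apply (semiconv_not_multiple n a _ _ _ m R2). cbn in Hm. lia.
  - replace (S (4 * j + 2)) with (4 * j + 3)%nat in * by lia.
    replace (S (4 * j + 3)) with (2 * (2 * j + 1) + 2)%nat in Hm by lia.
    rewrite loop_quot_even in Hm. apply (semiconv_not_multiple n a _ _ _ m R3). cbn in Hm. lia.
  - replace (S (4 * j + 3)) with (4 * j + 4)%nat in * by lia.
    replace (S (4 * j + 4)) with (2 * (2 * j + 1) + 3)%nat in Hm by lia.
    rewrite loop_quot_odd in Hm. apply (semiconv_not_multiple n a _ _ _ m R4). cbn in Hm. lia.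
Qed.

End LoopResidues.

(** A real with an infinite expansion has no other expansion, so it is an
    infinite loop mod [n] as soon as that single expansion avoids multiples
    of [n] among its semi-convergent denominators. *)
Lemma infinite_loop_of_unique_expansion n x a :
  is_cf_expansion x a -> (forall j, a j <> None) -> 0 < x ->
  (forall k m, (m <= quot (a (S k)))%nat -> ~ (k = O /\ m = O) ->
     ~ Nat.divide n (m * cf_q a k + cf_qprev a k)) ->
  infinite_loop_mod n x.
Proof.
  intros Ha Hall Hx Hnodiv. split; [exact Hx |].
  intros b Hb k m d (_ & Hm & ->) Hkm.
  assert (Eba : b = a) by (apply functional_extensionality, (exp_unique x a b); auto).
  subst b. apply Hnodiv; [| exact Hkm].
  destruct (a (S k)) eqn:E; [exact Hm | exfalso; exact (Hall (S k) E)].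
Qed.

Lemma loop_is_infinite_loop n : (5 <= n)%nat -> exists x, 0 < x /\ infinite_loop_mod n x.
Proof.
  intros Hn.
  assert (Hall : forall j, loop_quot n j <> None) by (intros j; discriminate).
  assert (Hpos : forall j t, loop_quot n (S j) = Some t -> (1 <= t)%nat).
  { intros [| i] t E; injection E as <-; [lia |].
    destruct (Nat.even i); lia. }
  destruct (infinite_expansion_exists (loop_quot n) Hall Hpos) as [x Hx].
  assert (Hx1 : 1 <= x).
  { destruct (exp_quot_bracketed x _ Hx 0 1 eq_refl) as [H _]. cbn [err_base fst snd] in H.
    simpl INR in H. lra. }
  exists x. split; [lra |].
  apply (infinite_loop_of_unique_expansion n x (loop_quot n)); auto; [lra |].
  intros k m. apply loop_no_multiple. exact Hn.
Qed.

Definition cf_list (l : list nat) : nat -> option nat := fun k => nth_error l k.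

Lemma nat_eq_of_near (t c : nat) : INR c - 1 < INR t < INR c + 1 -> t = c.
Proof.
  intros [H1 H2].
  assert (t < c + 1)%nat by (apply INR_lt; rewrite plus_INR; simpl; lra).
  assert (c < t + 1)%nat by (apply INR_lt; rewrite plus_INR; simpl; lra).
  lia.
Qed.

(** [3/2] has exactly the two expansions [[1; 2]] and [[1; 1, 1]]: the
    bracketing inequalities force [a_0 = 1] and [a_1 <= 2]; [a_1 = 2] ends
    the expansion, while [a_1 = 1] forces [a_2 = 1], which ends it. *)
Lemma three_halves_expansions b :
  is_cf_expansion (3 / 2) b -> b = cf_list [1; 2]%nat \/ b = cf_list [1; 1; 1]%nat.
Proof.
  intros Hb.
  destruct (b 0%nat) as [t0 |] eqn:E0; [| exfalso; destruct Hb as [H0 _]; exact (H0 E0)].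
  destruct (exp_quot_bracketed _ b Hb 0 t0 E0) as [S0 S0']. cbn [err_base fst snd] in S0, S0'.
  assert (t0 = 1%nat) by (apply nat_eq_of_near; simpl; split; nra). subst t0.
  destruct (err_unfold b (3 / 2) 0) as [Ep0 Ee0]. cbn [err_base fst snd] in Ep0, Ee0.
  rewrite E0 in Ee0. simpl INR in Ee0.
  destruct (exp_step _ b Hb 0 _ _ ltac:(congruence) Ee0 Ep0 ltac:(lra))
    as (t1 & E1 & Ht1 & S1 & Ee1 & Ep1).
  assert (t1 <= 2)%nat by (apply INR_le; simpl; lra).
  destruct (Nat.eq_dec t1 2) as [-> | Ht1'].
  - left. assert (Hstop := exp_stops _ b Hb 1 ltac:(rewrite Ee1; simpl; lra)).
    apply functional_extensionality. intros [| [| i]]; auto.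
    rewrite Hstop by lia. now destruct i.
  - right. assert (t1 = 1%nat) by lia. subst t1. simpl INR in Ee1.
    destruct (exp_step _ b Hb 1 _ _ ltac:(congruence) Ee1 Ep1 ltac:(lra))
      as (t2 & E2 & Ht2 & S2 & Ee2 & _).
    assert (t2 <= 1)%nat by (apply INR_le; simpl; lra).
    assert (t2 = 1%nat) by lia. subst t2.
    assert (Hstop := exp_stops _ b Hb 2 ltac:(rewrite Ee2; simpl; lra)).
    apply functional_extensionality. intros [| [| [| i]]]; auto.
    rewrite Hstop by lia. now destruct i.
Qed.

(** [3/2] is an infinite loop mod [4]: the semi-convergent denominators of
    [[1; 2]] are [1, 2] and the odd numbers [2m+1]; those of [[1; 1, 1]] are
    [1], [1, 2] and the odd numbers [2m+1]. *)
Lemma three_halves_infinite_loop : infinite_loop_mod 4 (3 / 2).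
Proof.
  split; [lra |]. intros b Hb k m d (Hk & Hm & ->) Hkm [z Hz].
  destruct (three_halves_expansions b Hb) as [-> | ->].
  - destruct k as [| [| k]]; cbn in Hm, Hz; [lia | lia |]. apply Hk. now destruct k.
  - destruct k as [| [| [| k]]]; cbn in Hm, Hz; [lia | lia | lia |]. apply Hk. now destruct k.
Qed.

Theorem mainTheorem7 : forall n : nat, (4 <= n)%nat ->
  exists alpha : R, 0 < alpha /\ infinite_loop_mod n alpha.
Proof.
  intros n Hn. destruct (Nat.eq_dec n 4) as [-> | Hn4].
  - exists (3 / 2). split; [lra | exact three_halves_infinite_loop].
  - apply loop_is_infinite_loop. lia.
Qed.
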